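(* Let $n$ be an integer and let \[ L(n) = p(n) + \sum_{j\geq 1} (-1)^j\Big( p\big(n-j(3j-2)\big) + p\big(n-j(3j+2)\big)\Big) = p(n) - p(n-1) - p(n-5) + p(n-8) + p(n-16) - p(n-21) - p(n-33) + \cdots. \] For $i\geq 1$ let $t^e_i = \frac{(2i-1)(2i-1+(-1)^i)}{2}$ be the $i$th even triangular number ($0, 6, 10, 28, \dots$) and $t^o_i = \frac{(2i-1)(2i-1-(-1)^i)}{2}$ the $i$th odd triangular number ($1,3,15,21,\dots$). If $n$ is even, then \[ L(n) = \sum_{i\geq 1} p\!\left(\frac{n-3t^e_i}{2}\right), \] and if $n$ is odd, then \[ L(n) = \sum_{i\geq 1} p\!\left(\frac{n-3t^o_i}{2}\right). \]
   Context: $p(m)$ denotes the number of partitions of the integer $m$, with $p(0)=1$ and $p(m)=0$ for $m<0$ (so all sums above are finite). Triangular numbers are the numbers $k(k+1)/2$, $k\geq 0$ (including $0$). *)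

From HB Require Import structures.
From mathcomp Require Import all_boot all_order all_algebra.
Set Implicit Arguments. Unset Strict Implicit. Unset Printing Implicit Defensive.
Import Order.TTheory GRing.Theory Num.Theory.

(* A partition of m is encoded by its multiplicity vector: f i = number of
   parts equal to i+1 (every part is <= m and occurs at most m times). *)
Definition npartitions (m : nat) : nat :=
  #|[set f : {ffun 'I_m -> 'I_m.+1} | (\sum_(i < m) i.+1 * f i == m)%N]|.

Definition p (m : int) : nat :=
  match m with Posz k => npartitions k | Negz _ => 0%N end.

Local Open Scope ring_scope.

Definition te (i : nat) : int :=
  divz ((2 * i%:Z - 1) * (2 * i%:Z - 1 + (-1) ^+ i)) 2.
Definition to (i : nat) : int :=
  divz ((2 * i%:Z - 1) * (2 * i%:Z - 1 - (-1) ^+ i)) 2.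

Definition L_partial (N : nat) (n : int) : int :=
  (p n)%:Z + \sum_(1 <= j < N.+1)
     (-1) ^+ j * ((p (n - j%:Z * (3 * j%:Z - 2)))%:Z
                  + (p (n - j%:Z * (3 * j%:Z + 2)))%:Z).

Definition R_partial (t : nat -> int) (N : nat) (n : int) : int :=
  \sum_(1 <= i < N.+1) ((p (divz (n - 3 * t i) 2))%:Z).

Goal [seq te i | i <- iota 1 4] = [:: 0; 6; 10; 28]. Proof. by []. Qed.
Goal [seq to i | i <- iota 1 4] = [:: 1; 3; 15; 21]. Proof. by []. Qed.

From HB Require Import structures.
From mathcomp Require Import all_boot all_order all_algebra.
From mathcomp Require Import zify ring.
From Stdlib Require Import Setoid Morphisms.
Import Order.TTheory GRing.Theory Num.Theory.
Local Open Scope ring_scope.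
Set Implicit Arguments. Unset Strict Implicit. Unset Printing Implicit Defensive.

(* Both sides are coefficients of power series, which we handle as polynomials
   modulo X^M.  With P(q) = sum p(n) q^n = 1/(q;q)_oo, L(n) is the coefficient
   of q^n in P(q) Theta(q), where Theta(q) = sum_(j in Z) (-1)^j q^(j(3j-2)),
   and the right-hand side is that of P(q^2) Psi(q), where Psi(q) sums q^(3t)
   over all triangular numbers t: as P(q^2) only has even powers and 3t = t
   mod 2, only the t of the parity of n contribute.  The Jacobi triple product
   gives Theta(q) = (q^6;q^6)(q;q^6)(q^5;q^6) and
   Psi(q) = (q^12;q^12)(-q^3;q^12)(-q^9;q^12), and elementary dissections of
   q-products show Theta(q) (q^2;q^2)_oo = Psi(q) (q;q)_oo, which is
   P(q) Theta(q) = P(q^2) Psi(q).  The triple product itself is the limit of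
   a finite identity obtained from the q-binomial theorem. *)

(** * Power series modulo X^k *)

Section Flat.
Variable R : comNzRingType.
Implicit Types (a b : {poly R}) (k l n : nat).

Definition flat k a : Prop := take_poly k a = 0.

Lemma flatP k a : flat k a <-> forall i, (i < k)%N -> a`_i = 0.
Proof.
split=> [Ha i lt_ik | Ha]; first by have := coef_take_poly k a i; rewrite Ha coef0 lt_ik.
by apply/polyP => i; rewrite coef_take_poly coef0; case: ifP => // /Ha.
Qed.

Lemma flat0 k : flat k 0.
Proof. exact: take_poly0r. Qed.

Lemma flatD k a b : flat k a -> flat k b -> flat k (a + b).
Proof. by rewrite /flat take_polyD => -> ->; rewrite addr0. Qed.

Lemma flatN k a : flat k a -> flat k (- a).
Proof. by rewrite /flat linearN /= => ->; rewrite oppr0. Qed.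

Lemma flatZ k (c : R) a : flat k a -> flat k (c *: a).
Proof. by rewrite /flat take_polyZ => ->; rewrite scaler0. Qed.

Lemma flat_sum k I r (P : pred I) (F : I -> {poly R}) :
  (forall i, P i -> flat k (F i)) -> flat k (\sum_(i <- r | P i) F i).
Proof. by move=> FP; elim/big_rec: _ => [|i a Pi]; [apply: flat0 | apply/flatD/FP]. Qed.

Lemma flat_le k l a : (k <= l)%N -> flat l a -> flat k a.
Proof.
by move=> le_kl /flatP Ha; apply/flatP => i lt_ik; apply: Ha; apply: leq_trans le_kl.
Qed.

Lemma flatM k l a b : flat k a -> flat l b -> flat (k + l) (a * b).
Proof.
move=> /flatP Ha /flatP Hb; apply/flatP => i lt_i; rewrite coefM big1 // => j _.
have [lt_jk | le_kj] := ltnP j k; first by rewrite Ha // mul0r.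
by rewrite Hb ?mulr0 //; have := ltn_ord j; lia.
Qed.

Lemma flatMr k a b : flat k a -> flat k (a * b).
Proof. by move=> Ha; rewrite -[k]addn0; apply: flatM => //; apply/flatP. Qed.

Lemma flatMl k a b : flat k b -> flat k (a * b).
Proof. by rewrite mulrC; apply: flatMr. Qed.

Lemma flatX n a : flat 1 a -> flat n (a ^+ n).
Proof.
move=> Ha; elim: n => [|n IHn]; first exact/flatP.
by rewrite exprS -add1n; apply: flatM.
Qed.

Lemma flatXn_le k l : (k <= l)%N -> flat k 'X^l.
Proof.
by move=> le_kl; apply/flatP => i lt_ik; rewrite coefXn; case: eqP => // eil; lia.
Qed.

Definition eqXn k a b : Prop := flat k (a - b).

End Flat.

Notation "a = b %[modX k ]" := (eqXn k a b) (at level 70, b at next level)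
  : ring_scope.

Section Congruence.
Variable R : comNzRingType.
Implicit Types (a b c d : {poly R}) (k l n : nat).

Lemma flat_eqXn0 k a : flat k a <-> a = 0 %[modX k].
Proof. by rewrite /eqXn subr0. Qed.

Lemma eqXn_refl k a : a = a %[modX k].
Proof. by rewrite /eqXn subrr; apply: flat0. Qed.

Lemma eqXnW k a b : a = b -> a = b %[modX k].
Proof. by move->; apply: eqXn_refl. Qed.

Lemma eqXn_sym k a b : a = b %[modX k] -> b = a %[modX k].
Proof. by move=> Hab; rewrite /eqXn -opprB; apply: flatN. Qed.

Lemma eqXn_trans k a b c : a = b %[modX k] -> b = c %[modX k] -> a = c %[modX k].
Proof. by move=> Hab Hbc; rewrite /eqXn -[a](subrK b) -addrA; apply: flatD. Qed.

Lemma eqXnD k a b c d :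
  a = b %[modX k] -> c = d %[modX k] -> a + c = b + d %[modX k].
Proof. by move=> Hab Hcd; rewrite /eqXn opprD addrACA; apply: flatD. Qed.

Lemma eqXnN k a b : a = b %[modX k] -> - a = - b %[modX k].
Proof. by move=> Hab; rewrite /eqXn -opprD; apply: flatN. Qed.

Lemma eqXnM k a b c d :
  a = b %[modX k] -> c = d %[modX k] -> a * c = b * d %[modX k].
Proof.
move=> Hab Hcd; rewrite /eqXn.
have -> : a * c - b * d = (a - b) * c + b * (c - d) by ring.
by apply: flatD; [apply: flatMr | apply: flatMl].
Qed.

End Congruence.

#[export] Hint Resolve eqXn_refl : core.

#[export] Instance eqXn_Equivalence (R : comNzRingType) k : Equivalence (@eqXn R k).
Proof. by split; [exact: eqXn_refl | exact: eqXn_sym | exact: eqXn_trans]. Qed.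

#[export] Instance eqXn_addr_Proper (R : comNzRingType) k :
  Proper (@eqXn R k ==> @eqXn R k ==> @eqXn R k) +%R.
Proof. by move=> a b Hab c d Hcd; apply: eqXnD. Qed.

#[export] Instance eqXn_mulr_Proper (R : comNzRingType) k :
  Proper (@eqXn R k ==> @eqXn R k ==> @eqXn R k) *%R.
Proof. by move=> a b Hab c d Hcd; apply: eqXnM. Qed.

#[export] Instance eqXn_oppr_Proper (R : comNzRingType) k :
  Proper (@eqXn R k ==> @eqXn R k) -%R.
Proof. by move=> a b Hab; apply: eqXnN. Qed.

Section CongruenceTheory.
Variable R : comNzRingType.
Implicit Types (a b E : {poly R}) (k l n : nat).

Lemma eqXn_le k l a b : (k <= l)%N -> a = b %[modX l] -> a = b %[modX k].
Proof. exact: flat_le. Qed.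

Lemma eqXn_coef k a b i : a = b %[modX k] -> (i < k)%N -> a`_i = b`_i.
Proof. by move=> /flatP Hab lt_ik; apply/eqP; rewrite -subr_eq0 -coefB Hab. Qed.

Lemma eqXn_sum k I r (P : pred I) (F G : I -> {poly R}) :
  (forall i, P i -> F i = G i %[modX k]) ->
  \sum_(i <- r | P i) F i = \sum_(i <- r | P i) G i %[modX k].
Proof.
by move=> FG; elim/big_rec2: _ => [|i a b Pi]; [apply: eqXn_refl | apply/eqXnD/FG].
Qed.

Lemma eqXn_prod k I r (P : pred I) (F G : I -> {poly R}) :
  (forall i, P i -> F i = G i %[modX k]) ->
  \prod_(i <- r | P i) F i = \prod_(i <- r | P i) G i %[modX k].
Proof.
by move=> FG; elim/big_rec2: _ => [|i a b Pi]; [apply: eqXn_refl | apply/eqXnM/FG].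
Qed.

Lemma eqXn_sum_trunc k N N' (F : nat -> {poly R}) :
  (forall j, (k <= j)%N -> flat k (F j)) -> (k <= N)%N -> (k <= N')%N ->
  \sum_(0 <= j < N) F j = \sum_(0 <= j < N') F j %[modX k].
Proof.
move=> Fk; suff to_k n : (k <= n)%N ->
    \sum_(0 <= j < n) F j = \sum_(0 <= j < k) F j %[modX k].
  by move=> /to_k -> /to_k ->.
move=> le_kn; rewrite (big_cat_nat _ (n := k)) //=.
have /flat_eqXn0 -> : flat k (\sum_(k <= j < n) F j).
  by rewrite big_nat_cond; apply: flat_sum => j /andP[/andP[le_kj _] _]; apply: Fk.
by rewrite addr0.
Qed.

Lemma eqXn_comp_Xn k n a b : (0 < n)%N -> a = b %[modX k] ->
  a \Po 'X^n = b \Po 'X^n %[modX k].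
Proof.
move=> n_gt0 /flatP ab; apply/flatP => i lt_ik.
rewrite -comp_polyB coef_comp_poly_Xn //; case: ifP => // _.
by apply: ab; apply: leq_ltn_trans (leq_div i n) lt_ik.
Qed.

Lemma eqXn_inv k E : E = 1 %[modX 1] -> exists V, E * V = 1 %[modX k].
Proof.
move=> E1; exists (\sum_(i < k) (1 - E) ^+ i).
have -> : E * \sum_(i < k) (1 - E) ^+ i = 1 - (1 - E) ^+ k.
  by rewrite -[(1 - E) ^+ k](subrK 1) subrX1; ring.
rewrite /eqXn addrAC subrr add0r; apply/flatN/flatX.
by rewrite -opprB; apply: flatN.
Qed.

Lemma eqXn_cancel k E a b :
  E = 1 %[modX 1] -> a * E = b * E %[modX k] -> a = b %[modX k].
Proof.
move=> E1 abE; have [V EV] := eqXn_inv k E1.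
by rewrite -[a]mulr1 -[b]mulr1 -EV !mulrA abE.
Qed.

End CongruenceTheory.

(** * q-Pochhammer symbols and Gaussian binomials *)

Lemma bin2S n : 'C(n.+1, 2) = ('C(n, 2) + n)%N.
Proof. by rewrite binS bin1. Qed.

Lemma bin2_mul2 n : ('C(n.+1, 2) * 2 = n.+1 * n)%N.
Proof. by elim: n => [|n IHn] //; rewrite bin2S; lia. Qed.

Lemma bin2D a b : 'C(a + b, 2) = ('C(a, 2) + 'C(b, 2) + a * b)%N.
Proof.
elim: b => [|b IHb]; first by rewrite addn0 bin0n muln0 !addn0.
by rewrite addnS !bin2S IHb mulnS; lia.
Qed.

Section QSeries.
Variable R : comNzRingType.
Implicit Types (a b q : R) (n k i : nat).

Definition qpoch a q n : R := \prod_(k < n) (1 - a * q ^+ k).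

Lemma qpoch0 a q : qpoch a q 0 = 1.
Proof. by rewrite /qpoch big_ord0. Qed.

Lemma qpochS a q n : qpoch a q n.+1 = qpoch a q n * (1 - a * q ^+ n).
Proof. by rewrite /qpoch big_ord_recr. Qed.

Lemma qpoch_rev a q n : \prod_(k < n) (1 - a * q ^+ (n - k.+1)) = qpoch a q n.
Proof.
rewrite /qpoch (reindex_inj rev_ord_inj); apply: eq_bigr => k _ /=.
by have lt_kn := ltn_ord k; have -> : (n - (n - k.+1).+1 = k)%N by lia.
Qed.

Lemma qpoch_dissect2 a q n :
  qpoch a q (n + n) = qpoch a (q ^+ 2) n * qpoch (a * q) (q ^+ 2) n.
Proof.
elim: n => [|n IHn]; first by rewrite !qpoch0 mulr1.
rewrite addnS addSn !qpochS IHn -!exprM !mul2n -!addnn (exprS q (n + n)); ring.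
Qed.

Lemma qpoch_dissect3 a q n : qpoch a q (n + n + n) =
  qpoch a (q ^+ 3) n * qpoch (a * q) (q ^+ 3) n * qpoch (a * q ^+ 2) (q ^+ 3) n.
Proof.
elim: n => [|n IHn]; first by rewrite !qpoch0 !mulr1.
rewrite !addnS !addSn !qpochS IHn -!exprM.
have -> : (3 * n = n + n + n)%N by lia.
rewrite !exprS; ring.
Qed.

Lemma qpochMN a q n : qpoch a q n * qpoch (- a) q n = qpoch (a ^+ 2) (q ^+ 2) n.
Proof.
rewrite /qpoch -big_split; apply: eq_bigr => k _ /=.
rewrite -exprM mulnC exprM; ring.
Qed.

Fixpoint qbinom q n k : R :=
  match n, k with
  | _, 0 => 1
  | 0, _.+1 => 0
  | n.+1, k.+1 => qbinom q n k.+1 + q ^+ (n - k) * qbinom q n k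
  end.

Lemma qbinom_small q n k : (n < k)%N -> qbinom q n k = 0.
Proof. by elim: n k => [|n IHn] [|k] //= lt_nk; rewrite !IHn ?mulr0 ?addr0 //; lia. Qed.

Lemma qbinomn0 q n : qbinom q n 0 = 1.
Proof. by case: n. Qed.

Lemma qbinomnn q n : qbinom q n n = 1.
Proof. by elim: n => //= n ->; rewrite qbinom_small // subnn mulr1 add0r. Qed.

Lemma qbinom_theorem q a b n :
  \prod_(k < n) (a + b * q ^+ k) =
  \sum_(i < n.+1) qbinom q n i * q ^+ 'C(i, 2) * a ^+ (n - i) * b ^+ i.
Proof.
elim: n => [|n IHn]; first by rewrite big_ord0 big_ord1 !expr0 !mulr1.
rewrite big_ord_recr /= IHn mulrDr !big_distrl /=.
rewrite [in RHS]big_ord_recl /= /bump /=.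
have -> : \sum_(i < n.+1)
     (qbinom q n (0 + i).+1 + q ^+ (n - (0 + i)) * qbinom q n (0 + i)) *
     q ^+ 'C((0 <= i) + i, 2) * a ^+ (n.+1 - ((0 <= i) + i)) * b ^+ ((0 <= i) + i) =
  \sum_(i < n.+1) (qbinom q n i.+1 * q ^+ 'C(i.+1, 2) * a ^+ (n - i) * b ^+ i.+1) +
  \sum_(i < n.+1) (q ^+ (n - i) * qbinom q n i * q ^+ 'C(i.+1, 2) * a ^+ (n - i) * b ^+ i.+1).
  by rewrite -big_split /=; apply: eq_bigr => i _; rewrite add0n subSS; ring.
rewrite big_ord_recl /= subn0 -addrA; congr (_ + _).
  by rewrite qbinomn0 subn0 !expr0 !mulr1 exprSr; ring.
congr (_ + _).
  rewrite [in RHS]big_ord_recr /= qbinom_small // !mul0r addr0.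
  apply: eq_bigr => i _; rewrite /bump /=.
  have -> : (n - i = (n - i.+1).+1)%N by have := ltn_ord i; lia.
  by rewrite exprS; ring.
apply: eq_bigr => i _.
rewrite bin2S exprS exprD.
have -> : q ^+ n = q ^+ (n - i) * q ^+ i by rewrite -exprD subnK //; have := ltn_ord i; lia.
ring.
Qed.

Lemma qbinom_qpoch q n i : (i <= n)%N ->
  qbinom q n i * qpoch q q i * qpoch q q (n - i) = qpoch q q n.
Proof.
elim: n i => [|n IHn] [|i] //= le_in; rewrite ?qpoch0 ?subn0 ?mul1r ?mulr1 //.
have [lt_in | le_ni] := ltnP i n; last first.
  have -> : i = n by lia.
  by rewrite qbinom_small // qbinomnn subnn subSS subnn !qpoch0; ring.
have := IHn i.+1 lt_in; have := IHn i (ltnW lt_in).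
rewrite subSS; set d := (n - i.+1)%N.
have -> : (n - i = d.+1)%N by lia.
rewrite !qpochS => E1 E2; set Pn := qpoch q q n in E1 E2 *.
transitivity (qbinom q n i.+1 * (qpoch q q i * (1 - q * q ^+ i)) * qpoch q q d * (1 - q * q ^+ d)
  + q ^+ d.+1 * (qbinom q n i * qpoch q q i * (qpoch q q d * (1 - q * q ^+ d))) * (1 - q * q ^+ i)).
  by ring.
rewrite E1 E2 (_ : n = (d + i).+1); last by lia.
by rewrite !exprS exprD; ring.
Qed.

End QSeries.

Section QSeriesTruncation.
Variable R : comNzRingType.
Implicit Types (a b c q : {poly R}) (k n : nat).

Lemma qpoch_eqXn1 a q n : flat 1 a -> qpoch a q n = 1 %[modX 1].
Proof.
move=> Ha; transitivity (\prod_(k < n) (1 : {poly R})); last by rewrite big1_eq.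
apply: eqXn_prod => k _; have /flat_eqXn0 -> : flat 1 (a * q ^+ k) by apply: flatMr.
by rewrite subr0.
Qed.

Lemma qpoch_trunc k a q n n' : flat 1 a -> flat 1 q -> (k <= n.+1)%N -> (n <= n')%N ->
  qpoch a q n' = qpoch a q n %[modX k].
Proof.
move=> Ha Hq le_kn; elim: n' => [|n' IHn'] le_nSn'; first by have -> : n = 0%N by lia.
have [le_nn' | lt_n'n] := leqP n n'; last by have -> : n = n'.+1 by lia.
have /flat_eqXn0 small : flat k (a * q ^+ n').
  by apply: flat_le _ (flatM Ha (flatX n' Hq)); lia.
by rewrite qpochS IHn' // small subr0 mulr1.
Qed.

Lemma qbinom_limit k q n i : flat 1 q -> (i <= n)%N -> (k <= i)%N -> (k <= n - i)%N ->
  qpoch q q k * qbinom q n i = 1 %[modX k].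
Proof.
move=> Hq le_in le_ki le_kni.
have to_k m : (k <= m)%N -> qpoch q q m = qpoch q q k %[modX k].
  by move=> le_km; apply: qpoch_trunc.
have E : qbinom q n i * qpoch q q k * qpoch q q k = qpoch q q k %[modX k].
  transitivity (qpoch q q n); last by apply: to_k; lia.
  by rewrite -(qbinom_qpoch q le_in) (to_k i) // (to_k (n - i)%N).
apply: (eqXn_cancel (qpoch_eqXn1 q k Hq)).
by rewrite mul1r (mulrC (qpoch q q k)); exact: E.
Qed.

Lemma comp_qpoch a b c n : qpoch a b n \Po c = qpoch (a \Po c) (b \Po c) n.
Proof.
rewrite /qpoch rmorph_prod; apply: eq_bigr => i _.
by rewrite rmorphB rmorph1 rmorphM rmorphXn.
Qed.

(* The equations let callers state the parameters in normal form, e.g. [q ^+ 6]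
   rather than [(q ^+ 2) ^+ 3]. *)
Lemma qpoch_dissect2_eqXn k a b b2 ab : flat 1 a -> flat 1 b ->
  b2 = b ^+ 2 -> ab = a * b ->
  qpoch a b k = qpoch a b2 k * qpoch ab b2 k %[modX k].
Proof.
move=> Ha Hb -> ->; rewrite -qpoch_dissect2.
by apply/eqXn_sym/qpoch_trunc => //; lia.
Qed.

Lemma qpoch_dissect3_eqXn k a b b3 ab ab2 : flat 1 a -> flat 1 b ->
  b3 = b ^+ 3 -> ab = a * b -> ab2 = a * b ^+ 2 ->
  qpoch a b k = qpoch a b3 k * qpoch ab b3 k * qpoch ab2 b3 k %[modX k].
Proof.
move=> Ha Hb -> -> ->; rewrite -qpoch_dissect3.
by apply/eqXn_sym/qpoch_trunc => //; lia.
Qed.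

End QSeriesTruncation.

(** * The Jacobi triple product *)

Lemma jtp_exponent_pos m j : (j <= m)%N ->
  ('C(m, 2) + m * m + 'C(j, 2) = 'C(j + m, 2) + m * (m + m - (j + m)))%N.
Proof. by move=> le_jm; rewrite bin2D; nia. Qed.

Lemma jtp_exponent_neg m l : (l < m)%N ->
  ('C(m, 2) + m * m + 'C(l.+2, 2) = 'C(m - l.+1, 2) + m * (m + m - (m - l.+1)))%N.
Proof.
move=> lt_lm; set d := (m - l.+1)%N; have -> : m = (d + l.+1)%N by lia.
have -> : (d + l.+1 + (d + l.+1) - d = d + l.+1 + l.+1)%N by lia.
by rewrite bin2D (bin2S l.+1); have := bin2_mul2 l; nia.
Qed.

Section JacobiTriple.
Variable R : idomainType.
Implicit Types (u w : R) (m : nat).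

(* The second sum is the range j = -(l + 1) of sum_(|j| <= m) u^C(j,2) w^C(j+1,2). *)
Definition theta_partial u w m : R :=
  \sum_(j < m.+1) u ^+ 'C(j, 2) * w ^+ 'C(j.+1, 2) +
  \sum_(l < m) u ^+ 'C(l.+2, 2) * w ^+ 'C(l.+1, 2).

Lemma jtp_prod_factor u w m :
  \prod_(k < m + m) ((u * w) ^+ m + w * (u * w) ^+ k) =
  (u * w) ^+ ('C(m, 2) + m * m) * w ^+ m *
  (qpoch (- u) (u * w) m * qpoch (- w) (u * w) m).
Proof.
set Q := u * w; rewrite big_split_ord /=.
have -> : \prod_(k < m) (Q ^+ m + w * Q ^+ k) =
          \prod_(k < m) (Q ^+ k * w * (1 - - u * Q ^+ (m - k.+1))).
  apply: eq_bigr => k _; have /subnKC {1}<- := ltn_ord k.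
  by rewrite addSnnS exprD exprS /Q; ring.
have -> : \prod_(k < m) (Q ^+ m + w * Q ^+ (m + k)) =
          \prod_(k < m) (Q ^+ m * (1 - - w * Q ^+ k)).
  by apply: eq_bigr => k _; rewrite exprD; ring.
rewrite !big_split /= prodrXr !prodr_const card_ord qpoch_rev.
rewrite -(big_mkord xpredT (fun k => k)) bin2_sum -exprM exprD /qpoch; ring.
Qed.

(* Rothe's theorem for the product of [jtp_prod_factor], whose sum over
   [i = m + j] splits according to the sign of [j]. *)
Lemma jacobi_triple_finite u w m : w != 0 -> u * w != 0 ->
  qpoch (- u) (u * w) m * qpoch (- w) (u * w) m =
  \sum_(j < m.+1) qbinom (u * w) (m + m) (j + m) * u ^+ 'C(j, 2) * w ^+ 'C(j.+1, 2) +
  \sum_(l < m) qbinom (u * w) (m + m) (m - l.+1) * u ^+ 'C(l.+2, 2) * w ^+ 'C(l.+1, 2).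
Proof.
move=> w0 uw0; set Q := u * w; set c := ('C(m, 2) + m * m)%N.
have uQ a b : Q ^+ a * w ^+ b = u ^+ a * w ^+ (a + b) by rewrite exprMn exprD mulrA.
have K0 : Q ^+ c * w ^+ m != 0 by rewrite mulf_neq0 // expf_neq0.
apply: (mulfI K0); rewrite -jtp_prod_factor qbinom_theorem.
have term i e f : (c + e = 'C(i, 2) + m * (m + m - i))%N -> (m + f = e + i)%N ->
    qbinom Q (m + m) i * Q ^+ 'C(i, 2) * (Q ^+ m) ^+ (m + m - i) * w ^+ i =
    Q ^+ c * w ^+ m * (qbinom Q (m + m) i * u ^+ e * w ^+ f).
  move=> Ee Ef.
  transitivity (qbinom Q (m + m) i * (Q ^+ ('C(i, 2) + m * (m + m - i)) * w ^+ i)).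
    by rewrite exprD exprM !mulrA.
  by rewrite uQ -Ee -addnA -Ef !exprD /Q !exprMn; ring.
pose F i := qbinom Q (m + m) i * Q ^+ 'C(i, 2) * (Q ^+ m) ^+ (m + m - i) * w ^+ i.
rewrite -(big_mkord xpredT F) (big_cat_nat _ (n := m)) //=; last by lia.
rewrite big_nat_rev /= (big_addn 0 _ m) subSn ?leq_addr // addnK.
rewrite !big_mkord mulrDr addrC !big_distrr /=; congr (_ + _).
  apply: eq_bigr => j _; have le_jm : (j <= m)%N by have := ltn_ord j; lia.
  by apply: term; [exact: jtp_exponent_pos | rewrite bin2S; lia].
apply: eq_bigr => l _; have lt_lm := ltn_ord l.
by rewrite add0n; apply: term; [exact: jtp_exponent_neg | rewrite (bin2S l.+1); lia].
Qed.

End JacobiTriple.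

Section JacobiTripleTruncated.
Variable R : idomainType.
Implicit Types (u w : {poly R}) (k m : nat).

Lemma jacobi_triple_eqXn k m u w :
  flat 1 u -> flat 1 w -> w != 0 -> u * w != 0 -> (k + k <= m)%N ->
  qpoch (u * w) (u * w) k * qpoch (- u) (u * w) k * qpoch (- w) (u * w) k =
  theta_partial u w m %[modX k].
Proof.
move=> Hu Hw w0 uw0 le_kkm; set Q := u * w; set Pk := qpoch Q Q k.
have HQ : flat 1 Q by apply: flatMr.
have to_k a : flat 1 a -> qpoch a Q m = qpoch a Q k %[modX k].
  by move=> Ha; apply: qpoch_trunc => //; lia.
rewrite -(to_k _ (flatN Hu)) -(to_k _ (flatN Hw)).
rewrite -mulrA jacobi_triple_finite // mulrDr !big_distrr /=.
have lim e x y : Pk * e = 1 %[modX k] -> Pk * (e * x * y) = x * y %[modX k].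
  by move=> Pe; rewrite !mulrA Pe mul1r.
have small e x y : flat k (x * y) -> Pk * (e * x * y) = x * y %[modX k].
  by move=> /flat_eqXn0 xy0; rewrite -(mulrA e) xy0 !mulr0.
apply: eqXnD; apply: eqXn_sum => j _.
  have [le_kj | lt_jk] := leqP k j.
    by apply/small/flatMl/(flat_le _ (flatX _ Hw)); rewrite bin2S; lia.
  by apply/lim/qbinom_limit => //; lia.
have [le_kj | lt_jk] := leqP k j.+1.
  by apply/small/flatMr/(flat_le _ (flatX _ Hu)); rewrite bin2S; lia.
by apply/lim/qbinom_limit => //; lia.
Qed.

End JacobiTripleTruncated.

(** * The identity P(q) Theta(q) = P(q^2) Psi(q) *)

Local Notation q := ('X : {poly int}).

Lemma flat1_Xn k : (0 < k)%N -> flat 1 (q ^+ k).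
Proof. by move=> k_gt0; apply: flatXn_le. Qed.

Lemma flat1_X : flat 1 q.
Proof. exact: (flat1_Xn (k := 1)). Qed.

Lemma flat1_NXn k : (0 < k)%N -> flat 1 (- q ^+ k).
Proof. by move=> k_gt0; apply/flatN/flat1_Xn. Qed.

Lemma Xn_neq0 k : q ^+ k != 0.
Proof. by rewrite expf_neq0 // polyX_eq0. Qed.

Lemma NXn_neq0 k : - q ^+ k != 0.
Proof. by rewrite oppr_eq0 Xn_neq0. Qed.

Definition pgf (M : nat) : {poly int} := \poly_(k < M) (npartitions k)%:R.

(* Expanding the product, the coefficient of q^k enumerates the multiplicity
   vectors counted by [npartitions k]. *)
Definition bounded_pgf (k : nat) : {poly int} :=
  \prod_(i < k) \sum_(j < k.+1) q ^+ (i.+1 * j).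

Lemma coef_bounded_pgf k : (bounded_pgf k)`_k = (npartitions k)%:R.
Proof.
rewrite /bounded_pgf bigA_distr_bigA /= coef_sum /npartitions -sum1_card natr_sum.
rewrite [RHS]big_mkcond /=; apply: eq_bigr => f _.
by rewrite prodrXr coefXn inE eq_sym; case: (_ == _).
Qed.

Lemma bounded_pgf_euler k : bounded_pgf k * qpoch q q k = 1 %[modX k.+1].
Proof.
rewrite /bounded_pgf /qpoch -big_split /=.
transitivity (\prod_(i < k) (1 : {poly int})); last by rewrite big1_eq.
apply: eqXn_prod => i _; rewrite -exprS.
have -> : \sum_(j < k.+1) q ^+ (i.+1 * j) = \sum_(j < k.+1) (q ^+ i.+1) ^+ j.
  by apply: eq_bigr => j _; rewrite exprM.
rewrite mulrC -opprB mulNr -subrX1 opprB -exprM.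
have /flat_eqXn0 -> : flat k.+1 (q ^+ (i.+1 * k.+1)) by apply: flatXn_le; nia.
by rewrite subr0.
Qed.

Lemma pgf_euler M : pgf M * qpoch q q M = 1 %[modX M].
Proof.
have [V EV] := eqXn_inv M (qpoch_eqXn1 q M flat1_X).
suff pgfV : pgf M = V %[modX M] by rewrite pgfV mulrC.
apply/flatP => i lt_iM; rewrite coefB coef_poly lt_iM -coef_bounded_pgf.
apply/eqP; rewrite subr_eq0; apply/eqP; apply: (eqXn_coef _ (ltnSn i)).
apply: (eqXn_cancel (qpoch_eqXn1 q i flat1_X)); rewrite bounded_pgf_euler.
rewrite -(qpoch_trunc (n' := M) flat1_X flat1_X (leqnn _) (ltnW lt_iM)) mulrC.
by symmetry; apply: eqXn_le EV.
Qed.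

Lemma pgf2_euler M : (pgf M \Po q ^+ 2) * qpoch (q ^+ 2) (q ^+ 2) M = 1 %[modX M].
Proof.
have := eqXn_comp_Xn (n := 2) isT (pgf_euler M).
by rewrite rmorphM rmorph1 /= comp_qpoch comp_polyX.
Qed.

Definition thetaL (N : nat) : {poly int} :=
  1 + \sum_(0 <= j < N) ((-1) ^+ j.+1 : int) *:
        (q ^+ (j.+1 * (3 * j + 1)) + q ^+ (j.+1 * (3 * j + 5))).

Definition psi (N : nat) : {poly int} :=
  \sum_(0 <= k < N) (q ^+ (3 * (k * k.*2.+1)) + q ^+ (3 * (k.+1 * k.*2.+1))).

Lemma signed_monomial a b c d : (- q ^+ c) ^+ a * (- q ^+ d) ^+ b =
  ((-1) ^+ (a + b) : int) *: q ^+ (c * a + d * b).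
Proof.
rewrite (exprNn (q ^+ c)) (exprNn (q ^+ d)) -mul_polyC rmorphXn rmorphN rmorph1.
by rewrite !exprD !exprM; ring.
Qed.

Lemma theta_partial_thetaL m : theta_partial (- q ^+ 5) (- q ^+ 1) m = thetaL m.
Proof.
rewrite /theta_partial /thetaL big_mkord big_ord_recl /= !expr0 mulr1 -addrA.
congr (_ + _); rewrite -big_split /=; apply: eq_bigr => j _.
rewrite !signed_monomial scalerDr.
have sq : ('C(j.+1, 2) + 'C(j.+2, 2) = j.+1 * j.+1)%N.
  by rewrite (bin2S j.+1); have := bin2_mul2 j; lia.
have sign : ((-1) ^+ (j.+1 * j.+1) : int) = (-1) ^+ j.+1.
  by rewrite -signr_odd oddM andbb signr_odd.
have e1 : (5 * 'C(j.+1, 2) + 1 * 'C(j.+2, 2) = j.+1 * (3 * j + 1))%N.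
  by rewrite (bin2S j.+1); have := bin2_mul2 j; nia.
have e2 : (5 * 'C(j.+2, 2) + 1 * 'C(j.+1, 2) = j.+1 * (3 * j + 5))%N.
  by rewrite (bin2S j.+1); have := bin2_mul2 j; nia.
by rewrite /bump /= add1n sq (addnC 'C(j.+2, 2)) sq sign e1 e2.
Qed.

Lemma theta_partial_psi m :
  theta_partial (q ^+ 3) (q ^+ 9) m = psi m + q ^+ (3 * (m * m.*2.+1)).
Proof.
have pos j : (q ^+ 3) ^+ 'C(j, 2) * (q ^+ 9) ^+ 'C(j.+1, 2) = q ^+ (3 * (j * j.*2.+1)).
  rewrite -!exprM -exprD; congr (_ ^+ _); rewrite bin2S.
  by case: j => [|j] //; have := bin2_mul2 j; nia.
have neg l : (q ^+ 3) ^+ 'C(l.+2, 2) * (q ^+ 9) ^+ 'C(l.+1, 2) =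
    q ^+ (3 * (l.+1 * l.*2.+1)).
  rewrite -!exprM -exprD; congr (_ ^+ _); rewrite (bin2S l.+1).
  by have := bin2_mul2 l; nia.
rewrite /theta_partial /psi big_mkord big_ord_recr /= pos addrAC -big_split /=.
by congr (_ + _); apply: eq_bigr => k _; rewrite pos neg.
Qed.

Lemma thetaL_eqXn k N N' : (k <= N)%N -> (k <= N')%N -> thetaL N = thetaL N' %[modX k].
Proof.
move=> le_kN le_kN'; apply: eqXnD => //; apply: eqXn_sum_trunc => // j le_kj.
by apply/flatZ/flatD; apply: flatXn_le; apply: leq_trans le_kj _; nia.
Qed.

Lemma psi_eqXn k N N' : (k <= N)%N -> (k <= N')%N -> psi N = psi N' %[modX k].
Proof.
apply: eqXn_sum_trunc => j le_kj.
by apply/flatD; apply: flatXn_le; apply: leq_trans le_kj _; rewrite -mul2n; nia.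
Qed.

Lemma thetaL_prod M N : (M <= N)%N ->
  thetaL N = qpoch (q ^+ 6) (q ^+ 6) M * qpoch (q ^+ 5) (q ^+ 6) M * qpoch q (q ^+ 6) M
  %[modX M].
Proof.
move=> le_MN; have uw : - q ^+ 5 * - q ^+ 1 = q ^+ 6 by rewrite mulrNN -exprD.
have uw0 : - q ^+ 5 * - q ^+ 1 != 0 by rewrite uw Xn_neq0.
have := jacobi_triple_eqXn (flat1_NXn (k := 5) isT) (flat1_NXn (k := 1) isT)
  (NXn_neq0 1) uw0 (leqnn (M + M)).
rewrite uw !opprK theta_partial_thetaL expr1 => ->.
by apply: thetaL_eqXn; rewrite ?leq_addr.
Qed.

Lemma psi_prod M N : (M <= N)%N ->
  psi N = qpoch (q ^+ 12) (q ^+ 12) M * qpoch (- q ^+ 3) (q ^+ 12) M *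
    qpoch (- q ^+ 9) (q ^+ 12) M %[modX M].
Proof.
move=> le_MN; have uw : q ^+ 3 * q ^+ 9 = q ^+ 12 by rewrite -exprD.
have uw0 : q ^+ 3 * q ^+ 9 != 0 by rewrite uw Xn_neq0.
have := jacobi_triple_eqXn (flat1_Xn (k := 3) isT) (flat1_Xn (k := 9) isT)
  (Xn_neq0 9) uw0 (leqnn (M + M)).
rewrite uw theta_partial_psi => ->.
have /flat_eqXn0 -> : flat M (q ^+ (3 * ((M + M) * (M + M).*2.+1))).
  by apply: flatXn_le; nia.
by rewrite addr0; apply: psi_eqXn; rewrite ?leq_addr.
Qed.

Lemma product_identity M :
  qpoch (q ^+ 6) (q ^+ 6) M * qpoch (q ^+ 5) (q ^+ 6) M * qpoch q (q ^+ 6) M *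
    qpoch (q ^+ 2) (q ^+ 2) M =
  qpoch (q ^+ 12) (q ^+ 12) M * qpoch (- q ^+ 3) (q ^+ 12) M *
    qpoch (- q ^+ 9) (q ^+ 12) M * qpoch q q M %[modX M].
Proof.
have E1 : qpoch q q M = qpoch q (q ^+ 6) M * qpoch (q ^+ 3) (q ^+ 6) M *
    qpoch (q ^+ 5) (q ^+ 6) M * qpoch (q ^+ 2) (q ^+ 2) M %[modX M].
  rewrite (qpoch_dissect2_eqXn M (b2 := q ^+ 2) (ab := q ^+ 2) flat1_X flat1_X);
    try by ring.
  rewrite (qpoch_dissect3_eqXn M (b3 := q ^+ 6) (ab := q ^+ 3) (ab2 := q ^+ 5)
    flat1_X (flat1_Xn (k := 2) isT)) //; ring.
have E6 : qpoch (q ^+ 6) (q ^+ 6) M = qpoch (q ^+ 3) (q ^+ 6) M *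
    qpoch (- q ^+ 3) (q ^+ 12) M * qpoch (- q ^+ 9) (q ^+ 12) M *
    qpoch (q ^+ 12) (q ^+ 12) M %[modX M].
  rewrite (qpoch_dissect2_eqXn M (b2 := q ^+ 12) (ab := q ^+ 12)
    (flat1_Xn (k := 6) isT) (flat1_Xn (k := 6) isT)); try by ring.
  have -> : qpoch (q ^+ 6) (q ^+ 12) M =
      qpoch (q ^+ 3) (q ^+ 6) M * qpoch (- q ^+ 3) (q ^+ 6) M.
    by rewrite qpochMN -!exprM.
  rewrite (qpoch_dissect2_eqXn M (b2 := q ^+ 12) (ab := - q ^+ 9)
    (flat1_NXn (k := 3) isT) (flat1_Xn (k := 6) isT)) ?mulrA //; ring.
by rewrite E1 E6; apply: eqXnW; ring.
Qed.

Lemma pgf_thetaL_psi M N : (M <= N)%N ->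
  pgf M * thetaL N = (pgf M \Po q ^+ 2) * psi N %[modX M].
Proof.
move=> le_MN.
transitivity (pgf M * thetaL N * ((pgf M \Po q ^+ 2) * qpoch (q ^+ 2) (q ^+ 2) M)).
  by rewrite pgf2_euler mulr1.
transitivity ((pgf M \Po q ^+ 2) * psi N * (pgf M * qpoch q q M)); last first.
  by rewrite pgf_euler mulr1.
rewrite thetaL_prod // psi_prod // mulrACA [X in _ = X %[modX M]]mulrACA.
by rewrite product_identity (mulrC (pgf M)).
Qed.

(** * Extracting coefficients *)

Lemma p_neg z : z < 0 -> p z = 0%N.
Proof. by case: z. Qed.

Lemma coef_pgfMXn M e n : (n < M)%N -> (pgf M * q ^+ e)`_n = (p (n%:Z - e%:Z))%:Z.
Proof.
move=> lt_nM; rewrite coefMXn; case: ltnP => [lt_ne | le_en].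
  by rewrite p_neg //; lia.
by rewrite subzn // coef_poly (leq_ltn_trans (leq_subr _ _) lt_nM) natz.
Qed.

Lemma coef_pgf2MXn M e n : (n < M)%N -> ((pgf M \Po q ^+ 2) * q ^+ e)`_n =
  if odd (n + e) then 0 else (p ((n%:Z - e%:Z) %/ 2)%Z)%:Z.
Proof.
move=> lt_nM; rewrite coefMXn; case: ltnP => [lt_ne | le_en].
  by rewrite p_neg ?if_same // ltNge divz_ge0 // -ltNge; lia.
rewrite coef_comp_poly_Xn // subzn // divz_nat dvdn2 oddB // oddD.
case: (odd n (+) odd e) => //=.
by rewrite coef_poly (leq_ltn_trans (leq_div _ _) (leq_ltn_trans (leq_subr _ _) lt_nM)) natz.
Qed.

Lemma coef_pgf_thetaL M N n : (n < M)%N -> (pgf M * thetaL N)`_n = L_partial N n.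
Proof.
move=> lt_nM; rewrite /thetaL /L_partial mulrDr mulr1 coefD.
rewrite coef_poly lt_nM [in RHS]big_add1 /= mulr_sumr coef_sum.
congr (_ + _); first by rewrite natz.
apply: eq_bigr => j _; rewrite -scalerAr coefZ mulrDr coefD !coef_pgfMXn //.
by congr (_ * (_ + _)); congr (Posz (p _)); lia.
Qed.

Lemma divz2_eq (x : int) (y : nat) : x = (y * 2)%N -> (x %/ 2)%Z = y.
Proof. by move->; rewrite PoszM mulzK. Qed.

Lemma te_to_split k : (te k.+1, to k.+1) =
  if odd k then ((k.+1 * k.*2.+1)%N : int, (k * k.*2.+1)%N : int)
  else ((k * k.*2.+1)%N : int, (k.+1 * k.*2.+1)%N : int).
Proof.
rewrite /te /to -signr_odd /=; case: (odd k) => /=.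
  by congr pair; apply: divz2_eq; rewrite expr0; lia.
by congr pair; apply: divz2_eq; rewrite expr1; lia.
Qed.

Lemma te_to_ge0 i : 0 <= te i.+1 /\ 0 <= to i.+1.
Proof. by have := te_to_split i; case: (odd i) => -[-> ->]. Qed.

Lemma coef_pgf2_psi M N n : (n < M)%N ->
  ((pgf M \Po q ^+ 2) * psi N)`_n = R_partial (if odd n then to else te) N n.
Proof.
move=> lt_nM; rewrite /psi /R_partial [in RHS]big_add1 /= mulr_sumr coef_sum.
apply: eq_bigr => k _; rewrite mulrDr coefD !coef_pgf2MXn // !oddD !oddM /= odd_double /=.
case: (odd n) => /=; have := te_to_split k.
all: case: (odd k) => -[te_k to_k]; rewrite ?te_k ?to_k /=.
all: by rewrite ?addr0 ?add0r PoszM.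
Qed.

Lemma L_partial_neg N k : L_partial N (Negz k) = 0.
Proof.
rewrite /L_partial add0r big_add1 big1 // => j _.
by rewrite !p_neg ?addr0 ?mulr0 // NegzE; nia.
Qed.

Lemma R_partial_neg t N k : (forall i, 0 <= t i.+1) -> R_partial t N (Negz k) = 0.
Proof.
move=> t_ge0; rewrite /R_partial big_add1 big1 // => i _.
by rewrite p_neg // ltNge divz_ge0 // -ltNge NegzE; have := t_ge0 i; lia.
Qed.

(* All nonzero terms of both series occur among the first N when N > |n|. *)
Theorem theorem4 (n : int) (N : nat) : (`|n| < N)%N ->
  (~~ odd `|n|%N -> L_partial N n = R_partial te N n) /\
  (odd `|n|%N -> L_partial N n = R_partial to N n).
Proof.
case: n => [n | k] /= lt_nN; last first.
  by rewrite L_partial_neg !R_partial_neg // => i; case: (te_to_ge0 i).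
have := eqXn_coef (pgf_thetaL_psi lt_nN) (ltnSn n).
rewrite coef_pgf_thetaL // coef_pgf2_psi // => E.
by split=> n_odd; rewrite E ?n_odd // (negbTE n_odd).
Qed.
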